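(* Let $P=\bigcup_{k=1}^{\infty}\{2^{2k-1},2^{2k-1}+1,\dots,2^{2k}-1\}$ and let $\Sigma_P=\{x\in\{0,1\}^{\mathbb{Z}_+}: x_i=x_j=1\Rightarrow |i-j|\in P\cup\{0\}\}$ with the shift $\sigma_P:\Sigma_P\to\Sigma_P$, $(\sigma_P x)_i=x_{i+1}$. Then $(\Sigma_P,\sigma_P)$ is $(2,3)$-transitive but not $(1,2)$-transitive, i.e. $(\Sigma_P\times\Sigma_P,\sigma_P^2\times\sigma_P^3)$ is transitive while $(\Sigma_P\times\Sigma_P,\sigma_P\times\sigma_P^2)$ is not.
   Context: $\mathbb{Z}_+=\{0,1,2,\dots\}$; $\{0,1\}^{\mathbb{Z}_+}$ carries the product topology. A dynamical system $(Y,g)$ ($Y$ compact metric, $g$ continuous) is transitive if for all non-empty open $U,V\subset Y$ there is $n\in\mathbb{N}$ with $U\cap g^{-n}(V)\ne\emptyset$. For $\mathbf{a}=(a_1,\dots,a_r)\in\mathbb{N}^r$, $(X,f)$ is $\mathbf{a}$-transitive if $(X^r,f^{a_1}\times\dots\times f^{a_r})$ is transitive. *)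

From Stdlib Require Import Arith.

Definition bseq := nat -> bool.

Definition inP (m : nat) : Prop :=
  exists k : nat, 1 <= k /\ 2 ^ (2 * k - 1) <= m /\ m <= 2 ^ (2 * k) - 1.

(* Sigma_P : x_i = x_j = 1 -> |i - j| in P u {0}  (stated for i < j; i = j gives 0,
   and the condition is symmetric in i, j). *)
Definition SigmaP (x : bseq) : Prop :=
  forall i j : nat, i < j -> x i = true -> x j = true -> inP (j - i).

Definition shift (x : bseq) : bseq := fun i => x (i + 1).

Definition InSP2 (p : bseq * bseq) : Prop := SigmaP (fst p) /\ SigmaP (snd p).

Definition prodmap (a b : nat) (p : bseq * bseq) : bseq * bseq :=
  (Nat.iter a shift (fst p), Nat.iter b shift (snd p)).

(* Open subsets of Sigma_P x Sigma_P for the (relative) product topology: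
   U is contained in Sigma_P x Sigma_P and each point of U has a cylinder
   neighbourhood (agreement on the first N coordinates of both components)
   whose trace on Sigma_P x Sigma_P lies in U. *)
Definition openSP2 (U : bseq * bseq -> Prop) : Prop :=
  forall p, U p -> InSP2 p /\
    exists N : nat, forall q, InSP2 q ->
      (forall i, i < N -> fst q i = fst p i /\ snd q i = snd p i) -> U q.

Definition transitiveSP2 (g : bseq * bseq -> bseq * bseq) : Prop :=
  forall U V : bseq * bseq -> Prop,
    openSP2 U -> openSP2 V -> (exists p, U p) -> (exists p, V p) ->
    exists n : nat, 1 <= n /\ exists p, U p /\ V (Nat.iter n g p).

Definition a_transitive2 (a1 a2 : nat) : Prop := transitiveSP2 (prodmap a1 a2).

(* In a subshift defined by a set P of allowed gaps between
   1s, two words of length N can be glued into one point of Sigma_P, the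
   second placed at offset s, as soon as every gap s + j - i (i, j < N) lies
   in P.  Hence (sigma^a x sigma^b) is transitive once, for every N, some
   n >= 1 makes all the gaps a*n + j - i and b*n + j - i lie in P
   ([transitive_of_gaps]).  For (a, b) = (2, 3) take M = 4^N and n = 5M:
   both 10M +- N and 15M +- N lie in the block [8M, 16M - 1] of P.

   Returning to the cylinder {x_0 = y_0 = 1} under
   sigma^a x sigma^b after n steps forces a*n and b*n to be gaps, i.e. both
   in P ([returns_of_transitive]); but m and 2m are never both in P, since
   the blocks of P are separated by factors of 2 ([inP_not_double]). *)

From Stdlib Require Import Arith Lia Bool.

Lemma iter_shift_at (m : nat) (x : bseq) (i : nat) :
  Nat.iter m shift x i = x (i + m).
Proof.
  revert i; induction m as [|m IH]; intro i; simpl.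
  - now rewrite Nat.add_0_r.
  - unfold shift at 1. rewrite IH. f_equal. lia.
Qed.

Lemma iter_prodmap (a b n : nat) (p : bseq * bseq) :
  Nat.iter n (prodmap a b) p =
  (Nat.iter (a * n) shift (fst p), Nat.iter (b * n) shift (snd p)).
Proof.
  induction n as [|n IH].
  - now rewrite !Nat.mul_0_r; destruct p.
  - change (Nat.iter (S n) (prodmap a b) p)
      with (prodmap a b (Nat.iter n (prodmap a b) p)).
    rewrite IH. unfold prodmap; cbn [fst snd].
    now rewrite !Nat.mul_succ_r, !(Nat.add_comm _ a), !(Nat.add_comm _ b),
      !Nat.iter_add.
Qed.

Lemma SigmaP_iter_shift (m : nat) (x : bseq) :
  SigmaP x -> SigmaP (Nat.iter m shift x).
Proof.
  intros Hx i j hij hi hj. rewrite iter_shift_at in hi, hj.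
  replace (j - i) with ((j + m) - (i + m)) by lia. apply Hx; auto; lia.
Qed.

Lemma inP_pos (m : nat) : inP m -> 0 < m.
Proof.
  intros [k [hk [lo _]]].
  pose proof (Nat.pow_nonzero 2 (2 * k - 1) ltac:(lia)). lia.
Qed.

(* The blocks of P lie between consecutive odd and even powers of 2, so a
   gap and its double are never both in P. *)
Lemma inP_not_double (m : nat) : inP m -> ~ inP (2 * m).
Proof.
  intros [k [hk [h1 h2]]] [j [hj [g1 g2]]].
  assert (Ek : 2 ^ (2 * k) = 2 * 2 ^ (2 * k - 1)).
  { replace (2 * k) with (S (2 * k - 1)) at 1 by lia. reflexivity. }
  assert (Ej : 2 ^ (2 * j) = 2 * 2 ^ (2 * j - 1)).
  { replace (2 * j) with (S (2 * j - 1)) at 1 by lia. reflexivity. }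
  pose proof (Nat.pow_nonzero 2 (2 * k - 1) ltac:(lia)).
  pose proof (Nat.pow_nonzero 2 (2 * j - 1) ltac:(lia)).
  assert (below : 2 ^ (2 * j - 1) < 2 ^ S (2 * k))
    by (rewrite Nat.pow_succ_r'; lia).
  assert (above : 2 ^ (2 * k) < 2 ^ (2 * j)) by lia.
  apply Nat.pow_lt_mono_r_iff in below; [|lia].
  apply Nat.pow_lt_mono_r_iff in above; [|lia]. lia.
Qed.

Lemma inP_long_block (N : nat) :
  exists M, N < M /\ forall m, 8 * M <= m <= 16 * M - 1 -> inP m.
Proof.
  exists (2 ^ (2 * N)). split.
  - assert (N < 2 ^ N) by (apply Nat.pow_gt_lin_r; lia).
    assert (2 ^ N <= 2 ^ (2 * N)) by (apply Nat.pow_le_mono_r; lia). lia.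
  - intros m hm. exists (N + 2).
    replace (2 * (N + 2) - 1) with (2 * N + 3) by lia.
    replace (2 * (N + 2)) with (2 * N + 4) by lia.
    rewrite !Nat.pow_add_r in *. simpl in *. lia.
Qed.

Definition glue (w u : bseq) (N s : nat) : bseq := fun i =>
  if i <? N then w i else if (s <=? i) && (i <? s + N) then u (i - s) else false.

Lemma glue_prefix (w u : bseq) (N s i : nat) : i < N -> glue w u N s i = w i.
Proof. intro hi. unfold glue. now destruct (Nat.ltb_spec i N); [|lia]. Qed.

Lemma glue_window (w u : bseq) (N s i : nat) :
  N <= s -> i < N -> glue w u N s (s + i) = u i.
Proof.
  intros hs hi. unfold glue.
  destruct (Nat.ltb_spec (s + i) N); [lia|].
  destruct (Nat.leb_spec s (s + i)); [|lia].
  destruct (Nat.ltb_spec (s + i) (s + N)); [|lia].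
  simpl. f_equal. lia.
Qed.

Lemma SigmaP_glue (w u : bseq) (N s : nat) :
  SigmaP w -> SigmaP u ->
  (forall i j, i < N -> j < N -> inP (s + j - i)) -> SigmaP (glue w u N s).
Proof.
  intros Hw Hu Hgap i j hij. unfold glue.
  destruct (Nat.ltb_spec i N), (Nat.ltb_spec j N).
  - apply Hw; auto.
  - destruct (Nat.leb_spec s j), (Nat.ltb_spec j (s + N)); simpl;
      intros _ ?; try discriminate.
    replace (j - i) with (s + (j - s) - i) by lia. apply Hgap; lia.
  - lia.
  - destruct (Nat.leb_spec s i), (Nat.ltb_spec i (s + N)); simpl;
      intros ?; try discriminate.
    destruct (Nat.leb_spec s j), (Nat.ltb_spec j (s + N)); simpl;
      intros ?; try discriminate.
    replace (j - i) with ((j - s) - (i - s)) by lia. apply Hu; auto; lia.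
Qed.

Lemma transitive_of_gaps (a b : nat) :
  (forall N, exists n, 1 <= n /\ forall i j, i < N -> j < N ->
     inP (a * n + j - i) /\ inP (b * n + j - i)) ->
  a_transitive2 a b.
Proof.
  intros Hgaps U V OU OV [p Up] [q Vq].
  destruct (OU p Up) as [[Sp1 Sp2] [N1 HU]].
  destruct (OV q Vq) as [[Sq1 Sq2] [N2 HV]].
  set (N := N1 + N2).
  destruct (Hgaps N) as [n [hn Hn]].
  (* The shifts a*n and b*n exceed the window, as the gap to position 0
     from position N-1 is positive. *)
  assert (long : N <= a * n /\ N <= b * n).
  { destruct N as [|N']; [lia|].
    destruct (Hn N' 0 ltac:(lia) ltac:(lia)) as [Ha Hb].
    apply inP_pos in Ha; apply inP_pos in Hb. lia. }
  set (r := (glue (fst p) (fst q) N (a * n), glue (snd p) (snd q) N (b * n))).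
  assert (Sr : InSP2 r).
  { split; apply SigmaP_glue; auto; intros i j hi hj; apply (Hn i j hi hj). }
  exists n. split; [exact hn|]. exists r. split.
  - apply HU; [exact Sr|]. intros i hi. cbn [fst snd r].
    rewrite !glue_prefix by lia. auto.
  - rewrite iter_prodmap. apply HV.
    + split; apply SigmaP_iter_shift, Sr.
    + intros i hi. cbn [fst snd r]. rewrite !iter_shift_at.
      rewrite !(Nat.add_comm i), !glue_window by lia. auto.
Qed.

Definition e0 : bseq := fun i => Nat.eqb i 0.

Lemma SigmaP_e0 : SigmaP e0.
Proof.
  intros i j hij hi hj. unfold e0 in *.
  apply Nat.eqb_eq in hi; apply Nat.eqb_eq in hj. lia.
Qed.

Lemma returns_of_transitive (a b : nat) :
  0 < a -> 0 < b -> a_transitive2 a b ->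
  exists n, 1 <= n /\ inP (a * n) /\ inP (b * n).
Proof.
  intros ha hb T.
  set (U := fun p : bseq * bseq => InSP2 p /\ fst p 0 = true /\ snd p 0 = true).
  assert (OU : openSP2 U).
  { intros p Hp. split; [apply Hp|]. exists 1. intros q Hq Hagree.
    destruct (Hagree 0 ltac:(lia)) as [E1 E2].
    destruct Hp as [_ [H1 H2]]. split; [exact Hq|split; congruence]. }
  assert (NU : exists p, U p).
  { exists (e0, e0). repeat split; apply SigmaP_e0. }
  destruct (T U U OU OU NU NU) as [n [hn [p [[[S1 S2] [x0 y0]] [_ [xn yn]]]]]].
  rewrite iter_prodmap in xn, yn. cbn [fst snd] in xn, yn.
  rewrite iter_shift_at in xn, yn.
  exists n. split; [exact hn|]. split.
  - replace (a * n) with (a * n - 0) by lia. apply S1; auto. nia.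
  - replace (b * n) with (b * n - 0) by lia. apply S2; auto. nia.
Qed.

Theorem mainTheorem6 : a_transitive2 2 3 /\ ~ a_transitive2 1 2.
Proof.
  split.
  - apply transitive_of_gaps. intro N.
    destruct (inP_long_block N) as [M [hNM block]].
    exists (5 * M). split; [lia|].
    intros i j hi hj. split; apply block; lia.
  - intro T.
    destruct (returns_of_transitive 1 2 ltac:(lia) ltac:(lia) T)
      as [n [_ [H1 H2]]].
    rewrite Nat.mul_1_l in H1. exact (inP_not_double n H1 H2).
Qed.
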